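(* Let $(X,\le)$ be a well-ordered set, $k>0$, let $<_1,<_2$ be upward strict orders on $X^k$, and let $U$ be a $<_1,<_2$-$\#$-decreasing function assignment for $X^k$. Then there exists a unique function $f:X^k\to X^k$ such that for every finite $A\subseteq X^k$ there is a finite $B$ with $A\subseteq B\subseteq X^k$ and $U(B)\subseteq f$ (as graphs).
   Context: A function assignment for $X^k$ assigns to each finite $A\subseteq X^k$ a function $U(A):A\to A$, identified with its graph. A strict order is a transitive irreflexive relation. For $x,y\in X^k$, $x\le_c y$ iff $x_i\le y_i$ for all $i$ (using the order $\le$ of $X$); a strict order $<$ on $X^k$ is upward iff $x\le_c y$ implies not $y<x$. $U$ is $<_1,<_2$-$\#$-decreasing iff for all finite $A\subseteq X^k$ and $x\in X^k$, either $U(A)\subseteq U(A\cup\{x\})$ or there exists $y$ with $x<_1y$ and $U(A\cup\{x\})(y)<_2U(A)(y)$. *)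

From mathcomp Require Import all_boot.
From Stdlib Require Import List.

Set Implicit Arguments.
Unset Strict Implicit.
Unset Printing Implicit Defensive.

Definition well_order (X : Type) (le : X -> X -> Prop) : Prop :=
  (forall x, le x x) /\
  (forall x y, le x y -> le y x -> x = y) /\
  (forall x y z, le x y -> le y z -> le x z) /\
  (forall x y, le x y \/ le y x) /\
  (forall S : X -> Prop, (exists x, S x) ->
     exists m, S m /\ forall y, S y -> le m y).

Definition tup (X : Type) (k : nat) := 'I_k -> X.

Definition le_c (X : Type) (le : X -> X -> Prop) (k : nat) (x y : tup X k) : Prop :=
  forall i : 'I_k, le (x i) (y i).

Definition strict_order (T : Type) (lt : T -> T -> Prop) : Prop :=
  (forall x y z, lt x y -> lt y z -> lt x z) /\ (forall x, ~ lt x x).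

Definition upward (X : Type) (le : X -> X -> Prop) (k : nat)
  (lt : tup X k -> tup X k -> Prop) : Prop :=
  strict_order lt /\ forall x y, le_c le x y -> ~ lt y x.

Definition finite_set (T : Type) (A : T -> Prop) : Prop :=
  exists l : list T, forall x, A x <-> In x l.

Definition add_pt (T : Type) (A : T -> Prop) (x : T) : T -> Prop :=
  fun z => A z \/ z = x.

(* A function assignment: U A is a function A -> A (only its values on A
   matter; the graph of U(A) is {(a, U A a) | a in A}). *)
Definition function_assignment (T : Type) (U : (T -> Prop) -> T -> T) : Prop :=
  forall A : T -> Prop, finite_set A -> forall a, A a -> A (U A a).

Definition sharp_decreasing (T : Type) (lt1 lt2 : T -> T -> Prop)
  (U : (T -> Prop) -> T -> T) : Prop :=
  forall A : T -> Prop, finite_set A -> forall x : T,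
    (forall a, A a -> U (add_pt A x) a = U A a)   (* U(A) ⊆ U(A ∪ {x}) *)
    \/ (exists y, A y /\ lt1 x y /\ lt2 (U (add_pt A x) y) (U A y)).

From mathcomp Require Import all_boot zify.
From Stdlib Require Import List Classical ClassicalEpsilon.
From Stdlib Require Import FunctionalExtensionality PropExtensionality.

Set Implicit Arguments.
Unset Strict Implicit.
Unset Printing Implicit Defensive.

(* Upward strict orders on X^k are well-founded by Dickson's lemma, so both
   orders support well-founded induction.  For finite C, the value U(C)(p) only
   depends on the points of C lying lt1-below p, and enlarging C without changing
   the values strictly below p can only lower U(C)(p) for lt2: add the new points
   lt1-minimal first; the first point whose value changes must then strictly
   decrease.  So f(q) can be defined by lt1-recursion as the lt2-least value
   U(B ∪ {q})(q) over the finite sets B strictly below q on which U(B) agrees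
   with f; the same monotonicity gives uniqueness and shows that sets on which
   U agrees with f are closed under finite unions. *)

Lemma increasing_enum (P : nat -> Prop) :
  (forall N, exists n, N <= n /\ P n) ->
  exists phi : nat -> nat, {homo phi : i j / i < j} /\ forall i, P (phi i).
Proof.
move=> unbP.
pose g N := proj1_sig (constructive_indefinite_description _ (unbP N)).
have gP N : N <= g N /\ P (g N).
  by rewrite /g; case: constructive_indefinite_description => n [].
pose phi n := iter n (fun m => g m.+1) (g 0).
exists phi; split; last by case=> [|i]; [exact: (gP 0).2 | exact: (gP _).2].
apply: homo_ltn => [j i l|i]; first exact: ltn_trans.
exact: (gP (phi i).+1).1.
Qed.

Lemma not_Acc_descending_chain (T : Type) (R : T -> T -> Prop) (x : T) :
  ~ Acc R x -> exists s : nat -> T, forall n, R (s n.+1) (s n).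
Proof.
move=> nAx.
have stepP y : ~ Acc R y -> exists z, R z y /\ ~ Acc R z.
  move=> nAy; apply: NNPP => nz; apply: nAy; constructor=> z Rzy.
  by apply: NNPP => nAz; apply: nz; exists z.
pose next y := epsilon (inhabits x) (fun z => R z y /\ ~ Acc R z).
pose s n := iter n next x.
have sP n : R (s n.+1) (s n) /\ ~ Acc R (s n.+1).
  elim: n => [|n [_ IH]]; exact: epsilon_spec (stepP _ _).
by exists s => n; case: (sP n).
Qed.

Section Dickson.
Variables (X : Type) (le : X -> X -> Prop).
Hypothesis wo : well_order le.

Lemma well_order_monotone_subseq (a : nat -> X) :
  exists phi : nat -> nat, {homo phi : i j / i < j} /\
    {homo (a \o phi) : i j / i < j >-> le i j}.
Proof.
case: wo => _ [_ [le_trans [_ le_min]]].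
have: forall N, exists n, N <= n /\ forall m, n <= m -> le (a n) (a m).
  move=> N; have [_ [[n Nn <-] minP]] := le_min (fun x => exists2 n, N <= n & a n = x)
    (ex_intro _ (a N) (ex_intro2 _ _ N (leqnn N) erefl)).
  exists n; split=> // m nm; apply: minP; exists m => //; exact: leq_trans nm.
case/increasing_enum=> phi [phi_incr phiP]; exists phi; split=> // i j ij.
exact/phiP/ltnW/phi_incr.
Qed.

Lemma dickson_subseq k (s : nat -> tup X k) m :
  exists phi : nat -> nat, {homo phi : i j / i < j} /\
    forall (c : 'I_k) i j, c < m -> i < j -> le (s (phi i) c) (s (phi j) c).
Proof.
elim: m => [|m [phi [phi_incr phiP]]]; first by exists id; split=> // c.
case: (ltnP m k) => [mk|km]; last first.
  by exists phi; split=> // c i j _; apply: phiP; exact: leq_trans (ltn_ord c) km.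
have [psi [psi_incr psiP]] := well_order_monotone_subseq (fun n => s (phi n) (Ordinal mk)).
exists (phi \o psi); split=> [i j ij|c i j]; first exact/phi_incr/psi_incr.
rewrite ltnS leq_eqVlt => /orP[/eqP cm|cm] ij; last exact/phiP/psi_incr.
have -> : c = Ordinal mk by apply: val_inj.
exact: psiP.
Qed.

Lemma dickson k (s : nat -> tup X k) : exists i j, i < j /\ le_c le (s i) (s j).
Proof.
have [phi [phi_incr phiP]] := dickson_subseq s k.
by exists (phi 0), (phi 1); split=> [|c]; [exact: phi_incr | exact: phiP].
Qed.

Lemma upward_well_founded k (lt : tup X k -> tup X k -> Prop) :
  upward le lt -> well_founded lt.
Proof.
case=> [[lt_trans _] lt_up] x; apply: NNPP => nAx.
have [s sP] := not_Acc_descending_chain nAx.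
have [i [j [ij le_ij]]] := dickson s.
apply: lt_up le_ij _.
apply: (homo_ltn (r := fun y z => lt z y)) ij => // y z w zy wz; exact: lt_trans wz zy.
Qed.
End Dickson.

Section FiniteSets.
Variable T : Type.
Implicit Types (A B : T -> Prop) (x : T).

Lemma set_ext A B : (forall z, A z <-> B z) -> A = B.
Proof.
by move=> AB; apply: functional_extensionality => z; apply: propositional_extensionality.
Qed.

Lemma finite_subset A B : finite_set A -> (forall z, B z -> A z) -> finite_set B.
Proof.
move=> [l Al] BA.
exists (filter (fun z => is_left (excluded_middle_informative (B z))) l) => z.
rewrite filter_In; case: excluded_middle_informative => /= [Bz|nBz].
  by split=> // _; split=> //; apply/Al/BA.
by split=> [/nBz|[]].
Qed.

Lemma finite_set0 : finite_set (fun _ : T => False).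
Proof. by exists nil. Qed.

Lemma finite_set1 x : finite_set (eq^~ x).
Proof. by exists (x :: nil) => z /=; split=> [->|[->|[]]]; [left|]. Qed.

Lemma finite_union A B : finite_set A -> finite_set B -> finite_set (fun z => A z \/ B z).
Proof.
move=> [l Al] [m Bm]; exists (l ++ m) => z.
by rewrite in_app_iff; split=> -[/Al|/Bm]; auto.
Qed.

Lemma finite_add_pt A x : finite_set A -> finite_set (add_pt A x).
Proof. by move=> finA; apply: finite_union finA (finite_set1 x). Qed.

Lemma finite_remove_ind (P : (T -> Prop) -> Prop) :
  (forall A, finite_set A -> (forall x, A x -> P (fun z => A z /\ z <> x)) -> P A) ->
  forall A, finite_set A -> P A.
Proof.
move=> IH A [l]; move: {2}(length l) (leqnn (length l)) => n.
elim: n A l => [|n IHn] A l ln Al; apply: IH => [|x Ax]; try by exists l.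
  by case: l ln Al => // _ /(_ x) [/(_ Ax)].
pose eqT (z y : T) := excluded_middle_informative (z = y).
apply: (IHn _ (remove eqT x l)) => [|z].
  by have := remove_length_lt eqT l x (proj1 (Al x) Ax); lia.
split=> [[/Al zl zx]|zr]; first exact: in_in_remove.
by have [/Al] := in_remove _ _ _ _ zr.
Qed.

Lemma finite_max (R : T -> T -> Prop) :
  (forall x y z, R x y -> R y z -> R x z) -> (forall x, ~ R x x) ->
  forall A, finite_set A -> (exists a, A a) -> exists2 m, A m & forall y, A y -> ~ R m y.
Proof.
move=> R_trans R_irr; apply: finite_remove_ind => A _ IH [a Aa].
case: (classic (exists b, A b /\ b <> a)) => [[b Ab]|no_other].
  have [m [Am ma] m_max] := IH a Aa (ex_intro _ b Ab).
  case: (classic (R m a)) => [Rma|nRma]; last first.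
    by exists m => // y Ay; case: (classic (y = a)) => [->|ya] //; exact: m_max.
  exists a => // y Ay Ray; case: (classic (y = a)) => [ya|ya].
    by apply: (R_irr a); rewrite -{2}ya.
  exact: m_max (R_trans _ _ _ Rma Ray).
exists a => // y Ay; case: (classic (y = a)) => [->|ya]; first exact: R_irr.
by case: no_other; exists y.
Qed.

Lemma well_founded_min (R : T -> T -> Prop) : well_founded R ->
  forall A, (exists a, A a) -> exists2 m, A m & forall y, A y -> ~ R y m.
Proof.
move=> R_wf A [a Aa]; apply: NNPP => no_min.
elim/(well_founded_ind R_wf): a Aa => a IH Aa.
by apply: no_min; exists a => // y Ay Rya; exact: IH Rya Ay.
Qed.
End FiniteSets.

Section SharpDecreasingLimit.
Variables (T : Type) (lt1 lt2 : T -> T -> Prop) (U : (T -> Prop) -> T -> T).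
Hypotheses (lt1_trans : forall x y z, lt1 x y -> lt1 y z -> lt1 x z)
           (lt1_irrefl : forall x, ~ lt1 x x)
           (lt2_trans : forall x y z, lt2 x y -> lt2 y z -> lt2 x z)
           (lt2_irrefl : forall x, ~ lt2 x x).
Hypotheses (lt1_wf : well_founded lt1) (lt2_wf : well_founded lt2).
Hypothesis U_dec : sharp_decreasing lt1 lt2 U.

Implicit Types (A B C D : T -> Prop) (h : T -> T).

Definition le1 x y := x = y \/ lt1 x y.
Definition le2 x y := x = y \/ lt2 x y.
Definition down C p := fun z => C z /\ le1 z p.

Lemma le1_trans x y z : le1 x y -> le1 y z -> le1 x z.
Proof. by case=> [->|xy] [<-|yz]; [left|right|right|right; exact: lt1_trans yz]. Qed.

Lemma lt1_not_le1 x y : lt1 x y -> ~ le1 y x.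
Proof.
move=> xy [yx|yx]; last exact: lt1_irrefl (lt1_trans xy yx).
by move: xy; rewrite yx; apply: lt1_irrefl.
Qed.

Lemma le2_trans x y z : le2 x y -> le2 y z -> le2 x z.
Proof. by case=> [->|xy] [<-|yz]; [left|right|right|right; exact: lt2_trans yz]. Qed.

Lemma le2_lt2_irrefl x y : le2 x y -> ~ lt2 y x.
Proof. by case=> [->|xy] yx; [exact: lt2_irrefl yx | exact: lt2_irrefl (lt2_trans xy yx)]. Qed.

Lemma le2_anti x y : le2 x y -> le2 y x -> x = y.
Proof. by move=> xy [//|/(le2_lt2_irrefl xy)]. Qed.

Lemma finite_down C p : finite_set C -> finite_set (down C p).
Proof. by move=> finC; apply: finite_subset finC _ => z []. Qed.

Lemma U_down C p : finite_set C -> C p -> U C p = U (down C p) p.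
Proof.
(* Remove the points of C outside down C p one at a time, an lt1-maximal one
   first: for it, the second alternative of [U_dec] would need a point of C
   above it. *)
move: C; apply: finite_remove_ind => C finC IH Cp.
case: (classic (exists z, C z /\ ~ le1 z p)) => [far|near]; last first.
  congr U; apply: set_ext => z; split=> [Cz|[//]]; split=> //.
  by apply: NNPP => zp; apply: near; exists z.
have [x [Cx xp] x_max] := finite_max lt1_trans lt1_irrefl
  (finite_subset finC (fun z (Hz : C z /\ ~ le1 z p) => proj1 Hz)) far.
have px : p <> x by move=> px; apply: xp; left.
pose C0 z := C z /\ z <> x.
have finC0 : finite_set C0 by apply: finite_subset finC _ => z [].
have C_add : C = add_pt C0 x.
  apply: set_ext => z; split=> [Cz|[[]//|->//]].
  by case: (classic (z = x)); [right | left].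
have -> : U C p = U C0 p.
  rewrite C_add; case: (U_dec finC0 x) => [-> //|[y [[Cy yx] [xy _]]]].
  case: (classic (le1 y p)) => [yp|yp]; first by case: xp; exact: le1_trans (or_intror xy) yp.
  by case: (x_max y).
rewrite (IH x Cx) //; congr U; apply: set_ext => z.
by split=> [[[]]|[Cz zp]] //; split=> //; split=> // zx; apply: xp; rewrite -zx.
Qed.

Lemma le1_refl x : le1 x x.
Proof. by left. Qed.

Lemma U_local C C' p : finite_set C -> finite_set C' -> C p ->
  (forall z, le1 z p -> C z <-> C' z) -> U C p = U C' p.
Proof.
move=> finC finC' Cp CC'.
have C'p : C' p by apply/(CC' p (le1_refl p)).
rewrite (U_down finC Cp) (U_down finC' C'p); congr U; apply: set_ext => z.
by split=> -[Cz zp]; split=> //; apply/(CC' z zp).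
Qed.

Lemma U_down_le C p w : finite_set C -> C w -> le1 w p -> U (down C p) w = U C w.
Proof.
move=> finC Cw wp; apply: U_local => //; first exact: finite_down.
by move=> z zw; split=> [[]//|Cz]; split=> //; exact: le1_trans zw wp.
Qed.

Lemma U_add_pt_above B x b : finite_set B -> B b -> ~ le1 x b ->
  U (add_pt B x) b = U B b.
Proof.
move=> finB Bb xb; apply: U_local => //; [exact: finite_add_pt | by left |].
by move=> z zb; split=> [[//|zx]|]; [case: xb; rewrite -zx | left].
Qed.

Lemma U_add_pt_le D x b : finite_set D -> D b ->
  (forall w, D w -> lt1 w b -> U (add_pt D x) w = U D w) ->
  le2 (U (add_pt D x) b) (U D b).
Proof.
move=> finD Db agree; case: (classic (lt1 x b)) => [xb|nxb]; last first.
  left; apply: U_local => //; [exact: finite_add_pt | by left |].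
  by move=> z zb; split=> [[//|zx]|]; [move: zb; rewrite zx => -[->|/nxb] | left].
have addE : add_pt (down D b) x = down (add_pt D x) b.
  apply: set_ext => z; split=> [[[Dz zb]|->]|[[Dz|->] zb]].
  - by split; [left|].
  - by split; [right|right].
  - by left.
  - by right.
have finDx : finite_set (add_pt D x) by exact: finite_add_pt.
case: (U_dec (finite_down b finD) x) => [sameE|[w [[Dw wb] [_]]]].
  left; move: (sameE b (conj Db (le1_refl b))).
  by rewrite addE !U_down_le //; [exact: le1_refl | left | exact: le1_refl].
rewrite addE !U_down_le //; last by left.
case: wb => [-> | wb]; first by right.
by rewrite agree // => /lt2_irrefl.
Qed.

Definition agree_below D D' p := forall w, D w -> lt1 w p -> U D w = U D' w.

Definition U_mono_at p := forall D D', finite_set D' -> (forall z, D z -> D' z) ->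
  D p -> agree_below D D' p -> le2 (U D' p) (U D p).

Lemma U_mono_add_min p D D' x : (forall w, lt1 w p -> U_mono_at w) ->
  finite_set D' -> (forall z, D z -> D' z) -> D' x -> ~ D x ->
  (forall z, D' z -> ~ D z -> ~ lt1 z x) -> D p -> agree_below D D' p ->
  le2 (U (add_pt D x) p) (U D p) /\ agree_below (add_pt D x) D' p.
Proof.
move=> mono_below finD' DD' D'x nDx x_min Dp agree.
set D1 := add_pt D x.
have finD : finite_set D by exact: finite_subset finD' DD'.
have finD1 : finite_set D1 by exact: finite_add_pt.
have D1D' z : D1 z -> D' z by case=> [/DD'|->].
have U_D1_x : U D1 x = U D' x.
  apply: U_local => //; first by right.
  move=> z zx; split=> [/D1D'//|D'z]; case: (classic (D z)) => [Dz|nDz]; first by left.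
  by case: zx => [->|/(x_min z D'z nDz)]; [right|].
have agree_D1 q : (forall z, D z -> lt1 z q -> U D1 z = U D z) ->
    agree_below D D' q -> agree_below D1 D' q.
  by move=> D1D DD'q z [Dz|->] zq; [rewrite D1D // DD'q | ].
have stable w : D w -> lt1 w p -> U D1 w = U D w.
  elim/(well_founded_ind lt1_wf): w => w IHw Dw wp.
  have below_w z : D z -> lt1 z w -> U D1 z = U D z.
    by move=> Dz zw; apply: IHw (lt1_trans zw wp).
  (* A first change at w would be a strict decrease, against [mono_below w]. *)
  case: (U_add_pt_le finD Dw below_w) => [//|lt_w].
  have agree_w : agree_below D D' w by move=> z Dz zw; apply: agree (lt1_trans zw wp).
  have := mono_below w wp D1 D' finD' D1D' (or_introl Dw) (agree_D1 w below_w agree_w).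
  by rewrite -agree // => /le2_lt2_irrefl.
split; first exact: U_add_pt_le.
exact: agree_D1.
Qed.

Lemma U_mono p : U_mono_at p.
Proof.
elim/(well_founded_ind lt1_wf): p => p mono_below D D' finD' DD' Dp agree.
suff: forall R, finite_set R -> forall D, (forall z, D z -> D' z) ->
    (forall z, R z <-> D' z /\ ~ D z) -> D p -> agree_below D D' p -> le2 (U D' p) (U D p).
  move=> key; apply: (key (fun z => D' z /\ ~ D z)) => //.
  by apply: finite_subset finD' _ => z [].
apply: finite_remove_ind => R _ IHR {}D {}DD' RE {}Dp {}agree.
case: (classic (exists z, R z)) => [neR|eR]; last first.
  left; congr (U _ p); apply: set_ext => z; split=> [D'z|/DD'//].
  by apply: NNPP => nDz; apply: eR; exists z; apply/RE.
have [x Rx x_min] := well_founded_min lt1_wf neR.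
have [D'x nDx] := proj1 (RE x) Rx.
have x_min' z : D' z -> ~ D z -> ~ lt1 z x by move=> D'z nDz; apply/x_min/RE.
have [step agree1] := U_mono_add_min mono_below finD' DD' D'x nDx x_min' Dp agree.
apply: le2_trans step; apply: IHR Rx _ _ _ (or_introl Dp) agree1 => [z [/DD'|->]//|z].
split=> [[/RE[D'z nDz] zx]|[D'z nDxz]]; first by split=> // -[|]//.
by split; [apply/RE; split=> // Dz; apply: nDxz; left | move=> zx; apply: nDxz; right].
Qed.

Definition compatible h B := forall b, B b -> h b = U B b.

Definition down_closed (P : T -> Prop) := forall y z, P y -> lt1 z y -> P z.

Definition solves_on (P : T -> Prop) h := forall A, finite_set A -> (forall a, A a -> P a) ->
  exists B, [/\ finite_set B, forall a, A a -> B a, forall b, B b -> P b & compatible h B].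

Lemma down_closed_le1 P y z : down_closed P -> P y -> le1 z y -> P z.
Proof. by move=> Pdown Py [->|zy] //; exact: Pdown zy. Qed.

Lemma compatible_restrict (Q : T -> Prop) h B : down_closed Q -> finite_set B ->
  compatible h B -> compatible h (fun z => B z /\ Q z).
Proof.
move=> Qdown finB hB b [Bb Qb]; rewrite hB //; apply: U_local => //.
  by apply: finite_subset finB _ => z [].
by move=> z zb; split=> [Bz|[]//]; split=> //; exact: down_closed_le1 Qb zb.
Qed.

Lemma solves_on_sub P Q h : down_closed Q -> (forall z, Q z -> P z) ->
  solves_on P h -> solves_on Q h.
Proof.
move=> Qdown QP hP A finA AQ.
have [B [finB AB _ hB]] := hP A finA (fun a Aa => QP a (AQ a Aa)).
exists (fun z => B z /\ Q z); split=> [|a Aa|b []//|]; last exact: compatible_restrict.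
  by apply: finite_subset finB _ => z [].
by split; [exact: AB | exact: AQ].
Qed.

Lemma solves_on_ext P h h' : solves_on P h -> (forall z, P z -> h z = h' z) ->
  solves_on P h'.
Proof.
move=> hP hh' A finA AP; have [B [finB AB BP hB]] := hP A finA AP.
by exists B; split=> // b Bb; rewrite -hh'; [exact: hB | exact: BP].
Qed.

Lemma solves_on_unique P h1 h2 : solves_on P h1 -> solves_on P h2 ->
  forall z, P z -> h1 z = h2 z.
Proof.
have half ha hb z : solves_on P ha -> solves_on P hb -> P z ->
    (forall y, P y -> lt1 y z -> ha y = hb y) -> le2 (hb z) (ha z).
  move=> haP hbP Pz below.
  have [|B1 [finB1 zB1 B1P haB1]] := haP (eq^~ z) (finite_set1 z); first by move=> a ->.
  have [B2 [finB2 B12 _ hbB2]] := hbP B1 finB1 B1P.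
  have B1z : B1 z by exact: zB1.
  rewrite haB1 // hbB2; last exact: B12.
  apply: U_mono => // w B1w wz; rewrite -haB1 // -hbB2; last exact: B12.
  by apply: below; [exact: B1P|].
move=> h1P h2P z; elim/(well_founded_ind lt1_wf): z => z IH Pz.
have below y : P y -> lt1 y z -> h1 y = h2 y by move=> Py yz; exact: IH.
apply: le2_anti; [apply: half h2P h1P Pz _ | apply: half h1P h2P Pz _] => // y Py yz.
by rewrite below.
Qed.

Lemma compatible_union h B1 B2 : finite_set B1 -> finite_set B2 ->
  compatible h B1 -> compatible h B2 ->
  (forall p, B1 p \/ B2 p -> solves_on (le1^~ p) h) ->
  compatible h (fun z => B1 z \/ B2 z).
Proof.
move=> finB1 finB2 hB1 hB2 local.
set C := fun z => B1 z \/ B2 z.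
have finC : finite_set C by exact: finite_union.
suff U_C p : C p -> U C p = h p by move=> p Cp; rewrite U_C.
elim/(well_founded_ind lt1_wf): p => p IH Cp.
have from_part Bi : finite_set Bi -> compatible h Bi -> (forall z, Bi z -> C z) -> Bi p ->
    le2 (U C p) (h p).
  move=> finBi hBi BiC Bip; rewrite hBi //; apply: U_mono => // w Biw wp.
  by rewrite -hBi // IH //; exact: BiC.
have le_h : le2 (U C p) (h p).
  case: (Cp) => Bp; first by apply: (from_part B1) Bp => // z; left.
  by apply: (from_part B2) Bp => // z; right.
have [B [finB CB _ hB]] := local p Cp (down C p) (finite_down p finC) (fun a => @proj2 _ _).
have Cp' : down C p p := conj Cp (le1_refl p).
have ge_h : le2 (h p) (U C p).
  rewrite hB; last exact: CB Cp'.
  rewrite (U_down finC Cp); apply: U_mono => // w [Cw wp'] wp.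
  by rewrite U_down_le // IH // hB //; exact: CB.
exact: le2_anti le_h ge_h.
Qed.

Lemma solves_on_of_local P h : down_closed P ->
  (forall p, P p -> solves_on (le1^~ p) h) -> solves_on P h.
Proof.
move=> Pdown local A [l Al] AP.
suff: forall s, (forall a, In a s -> P a) -> exists B,
    [/\ finite_set B, forall a, In a s -> B a, forall b, B b -> P b & compatible h B].
  move=> /(_ l (fun a la => AP a (proj2 (Al a) la))) [B [finB lB BP hB]].
  by exists B; split=> // a /Al; exact: lB.
move=> {A Al AP}; elim=> [_|a s IH asP].
  by exists (fun _ => False); split=> //; exact: finite_set0.
have [B [finB lB BP hB]] := IH (fun b sb => asP b (or_intror sb)).
have Pa : P a := asP a (or_introl erefl).
have [|Ba [finBa aBa BaP hBa]] := local a Pa (eq^~ a) (finite_set1 a); first by move=> z; left.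
have BBaP z : B z \/ Ba z -> P z by case=> [/BP //|/BaP]; exact: down_closed_le1.
exists (fun z => B z \/ Ba z); split=> //; first exact: finite_union.
  by move=> z [<-|sz]; [right; exact: aBa | left; exact: lB].
by apply: compatible_union => // p /BBaP; exact: local.
Qed.

(* The value at z of some solution below z; by [solves_on_unique] it does not
   depend on the solution chosen. *)
Definition solution (z : T) : T := epsilon (inhabits id) (solves_on (le1^~ z)) z.

Lemma solution_solves_below q :
  (exists h, solves_on (le1^~ q) h) -> solves_on (le1^~ q) solution.
Proof.
move=> exq; have hqP := epsilon_spec (inhabits id) _ exq.
apply: (solves_on_ext hqP) => z zq.
have hqPz : solves_on (le1^~ z) (epsilon (inhabits id) (solves_on (le1^~ q))).
  apply: solves_on_sub hqP => [y x yz xy|y yz]; last exact: le1_trans yz zq.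
  by apply: le1_trans (or_intror xy) yz.
rewrite /solution; apply: (solves_on_unique hqPz _ (le1_refl z)).
by apply: epsilon_spec; eexists; exact: hqPz.
Qed.

Lemma solves_on_extend q h : solves_on (lt1^~ q) h ->
  exists m, solves_on (le1^~ q)
    (fun z => if excluded_middle_informative (z = q) then m else h z).
Proof.
move=> hP.
pose V m := exists B,
  [/\ finite_set B, forall b, B b -> lt1 b q, compatible h B & m = U (add_pt B q) q].
have V0 : V (U (add_pt (fun _ => False) q) q).
  by exists (fun _ => False); split=> //; exact: finite_set0.
have [_ [B0 [finB0 B0q hB0 ->]] m_min] := well_founded_min lt2_wf (ex_intro _ _ V0).
have U_add_q B b : finite_set B -> (forall b, B b -> lt1 b q) -> B b ->
    U (add_pt B q) b = U B b.
  by move=> finB Bq Bb; apply: U_add_pt_above (lt1_not_le1 (Bq b Bb)).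
exists (U (add_pt B0 q) q) => F finF Fq.
pose A z := (F z /\ z <> q) \/ B0 z.
have finA : finite_set A by apply: finite_union => //; apply: finite_subset finF _ => z [].
have Aq a : A a -> lt1 a q by case=> [[/Fq [//|//]]|/B0q].
have [B1 [finB1 AB1 B1q hB1]] := hP A finA Aq.
have B01 b : B0 b -> B1 b by move=> B0b; apply: AB1; right.
exists (add_pt B1 q); split; first exact: finite_add_pt.
- move=> a Fa; case: (classic (a = q)) => [->|aq]; [by right | by left; apply: AB1; left].
- by move=> b [/B1q bq|->]; [right | exact: le1_refl].
move=> b [B1b|->] /=.
  case: excluded_middle_informative => /= [bq|nbq]; last by rewrite U_add_q //; exact: hB1.
  by have := B1q b B1b; rewrite bq => /lt1_irrefl.
case: excluded_middle_informative => //= _.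
have le_m : le2 (U (add_pt B1 q) q) (U (add_pt B0 q) q).
  apply: U_mono => [|z [/B01 B1z|->]||w [B0w|->] wq]; try by [left|right].
  - exact: finite_add_pt.
  - rewrite (U_add_q B0) // (U_add_q B1) //; last exact: B01.
    by rewrite -hB0 // hB1 //; exact: B01.
  - by case: (lt1_irrefl wq).
case: le_m => [//|lt_m]; case: (m_min _ _ lt_m).
by exists B1; split.
Qed.

Lemma solves_below_exists q : exists h, solves_on (le1^~ q) h.
Proof.
elim/(well_founded_ind lt1_wf): q => q IH.
have solP : solves_on (lt1^~ q) solution.
  apply: solves_on_of_local => [y z yq zy|p pq]; first exact: lt1_trans zy yq.
  exact/solution_solves_below/IH.
have [m mP] := solves_on_extend solP.
by eexists; exact: mP.
Qed.

Lemma sharp_decreasing_limit : exists! f : T -> T, forall A, finite_set A ->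
  exists B, finite_set B /\ (forall a, A a -> B a) /\ (forall b, B b -> f b = U B b).
Proof.
have solP : solves_on (fun _ => True) solution.
  apply: solves_on_of_local => // p _.
  exact/solution_solves_below/solves_below_exists.
exists solution; split=> [A finA|g gP].
  by have [B [finB AB _ hB]] := solP A finA (fun _ _ => I); exists B.
apply: functional_extensionality => z; apply: (solves_on_unique solP _ I).
by move=> A finA _; have [B [finB [AB gB]]] := gP A finA; exists B.
Qed.
End SharpDecreasingLimit.

Theorem theorem4p16 (X : Type) (le : X -> X -> Prop) (k : nat)
  (lt1 lt2 : tup X k -> tup X k -> Prop)
  (U : (tup X k -> Prop) -> tup X k -> tup X k) :
  well_order le -> 0 < k ->
  upward le lt1 -> upward le lt2 ->
  function_assignment U -> sharp_decreasing lt1 lt2 U ->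
  exists! f : tup X k -> tup X k,
    forall A : tup X k -> Prop, finite_set A ->
      exists B : tup X k -> Prop,
        finite_set B /\ (forall a, A a -> B a) /\
        (forall b, B b -> f b = U B b).
Proof.
move=> wo _ up1 up2 _ U_dec.
have [[lt1_trans lt1_irrefl] _] := up1.
have [[lt2_trans lt2_irrefl] _] := up2.
exact: sharp_decreasing_limit lt1_trans lt1_irrefl lt2_trans lt2_irrefl
  (upward_well_founded wo up1) (upward_well_founded wo up2) U_dec.
Qed.
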